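(* For every integer $n\ge 2$, the chromatic number of $H_2(n,n-1)$ equals $4$.
   Context: For $x,y\in\mathbb{Z}_2^n$, $\mathrm{d}(x,y)=|\{i: x_i\neq y_i\}|$ is the Hamming distance. $H_2(n,n-1)$ is the simple undirected graph with vertex set $\mathbb{Z}_2^n$ in which $x,y$ are adjacent iff $\mathrm{d}(x,y)\ge n-1$. *)

From mathcomp Require Import all_boot.
Set Implicit Arguments. Unset Strict Implicit. Unset Printing Implicit Defensive.

Definition vec (n : nat) := {ffun 'I_n -> bool}.

Definition hamming (n : nat) (x y : vec n) : nat := #|[set i | x i != y i]|.

(* Adjacency of H_2(n, n-1): d(x,y) >= n-1 (and x != y, automatic for n >= 2;
   included to keep the graph simple/loopless for all n). *)
Definition H2adj (n : nat) : rel (vec n) :=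
  fun x y => (x != y) && (n.-1 <= hamming x y).

Definition proper_colouring (T : finType) (e : rel T) (k : nat) (c : T -> 'I_k) :=
  forall x y, e x y -> c x != c y.

Definition colourable (T : finType) (e : rel T) (k : nat) :=
  exists c : T -> 'I_k, proper_colouring e c.

Definition chromatic_number_is (T : finType) (e : rel T) (k : nat) :=
  colourable e k /\ forall j, j < k -> ~ colourable e j.

(* Colouring by the first two coordinates gives chi <= 4.  For the lower bound let
   m be the even one of n - 1 and n, and send x to its first m coordinates (the
   others set to 0), complemented entirely when their sum is odd.  This maps the
   edges of the cube Q_m to pairs at distance n - 1 and antipodal pairs of Q_m to
   pairs at distance m >= n - 1, so a 3-colouring c of H_2(n, n-1) yields a proper
   3-colouring of Q_m giving antipodal vertices distinct colours.  Since the
   4-cycles of Q_m carry no winding, c lifts, one direction at a time, to a height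
   h : Q_m -> Z with unit steps and h = c mod 3.  Along a geodesic from 0 to its
   antipode, h(antipode) - h is even, moves by at most 2 and changes sign, hence
   vanishes: a discrete Borsuk-Ulam argument producing an antipodal pair of equal
   colour. *)

From mathcomp Require Import all_boot ssralg ssrnum ssrint intdiv zify.

Set Implicit Arguments. Unset Strict Implicit. Unset Printing Implicit Defensive.

Import GRing.Theory Num.Theory.

Lemma colourable_leq (T : finType) (e : rel T) j k :
  j <= k -> colourable e j -> colourable e k.
Proof.
move=> jk [c proper_c]; exists (widen_ord jk \o c) => x y /proper_c.
by apply: contra => /eqP /(congr1 val) /= eq_c; apply/eqP/val_inj.
Qed.

Lemma discrete_ivt_pos (a : nat -> int) (d : int) N :
  (forall k, k < N -> (`|a k.+1 - a k| <= d)%R) ->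
  (forall k, k <= N -> (d %| a k)%Z) ->
  (0 < a 0%N)%R -> (a N <= 0)%R -> exists2 k, k <= N & a k = 0%R.
Proof.
elim: N => [|N IH] steps dvd a0 aN; first by exists 0 => //; lia.
have [aN0|aN0] := lerP (a N) 0%R.
  have [k kN ak] := IH (fun k kN => steps k (ltnW kN)) (fun k kN => dvd k (leqW kN)) a0 aN0.
  by exists k => //; apply: leqW.
have d_le : (`|d| <= `|a N|)%N by apply: dvdn_leq; [lia | exact: dvd (leqnSn N)].
by exists N.+1 => //; have := steps N (ltnSn N); lia.
Qed.

Lemma discrete_ivt (a : nat -> int) (d : int) N :
  (forall k, k < N -> (`|a k.+1 - a k| <= d)%R) ->
  (forall k, k <= N -> (d %| a k)%Z) ->
  (a 0%N * a N <= 0)%R -> exists2 k, k <= N & a k = 0%R.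
Proof.
move=> steps dvd sign; case: (ltrgtP (a 0%N) 0%R) => [a0|a0|a0]; last by exists 0.
- have [k kN ak] : exists2 k, k <= N & (- a k = 0)%R.
    apply: (@discrete_ivt_pos (fun k => - a k)%R d) => [k kN|k kN||] /=.
    + by rewrite -opprD normrN; apply: steps.
    + by rewrite dvdzE abszN; apply: dvd.
    + lia.
    + nia.
  by exists k => //; lia.
- by apply: (discrete_ivt_pos steps dvd) => //; nia.
Qed.

Lemma unit_walk_parity (a : nat -> int) N :
  (forall k, k < N -> `|a k.+1 - a k|%R = 1%R) -> (a N = a 0%N + N %[mod 2])%Z.
Proof.
elim: N => [|N IH] steps; first by rewrite addr0.
have := IH (fun k kN => steps k (ltnW kN)); have := steps N (ltnSn N); lia.
Qed.

Lemma ord3_modz_inj (a b : 'I_3) : (a%:Z = b %[mod 3])%Z -> a = b.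
Proof. by move=> ab; apply: ord_inj; have := ltn_ord a; have := ltn_ord b; lia. Qed.

Definition unit_lift (a b : 'I_3) : int := if b.+1 == a %[mod 3] then 1%R else (-1)%R.

Lemma unit_liftP (a b : 'I_3) :
  a != b -> `|unit_lift a b|%R = 1%R /\ ((b%:Z + unit_lift a b)%R = a %[mod 3])%Z.
Proof. by case: a b => [[|[|[|?]]] ?] [[|[|[|?]]] ?]. Qed.

Section Hypercube.

Variable n : nat.
Implicit Types (x : vec n) (i : 'I_n).

Definition flip x i : vec n := [ffun k => x k (+) (k == i)].

Lemma flipK i : involutive (flip^~ i).
Proof. by move=> x; apply/ffunP => k; rewrite !ffunE -addbA addbb addbF. Qed.

Lemma flipC x i j : flip (flip x i) j = flip (flip x j) i.
Proof. by apply/ffunP => k; rewrite !ffunE addbAC. Qed.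

Lemma flip_at x i : flip x i i = ~~ x i.
Proof. by rewrite ffunE eqxx addbT. Qed.

Lemma flip_other x i j : j != i -> flip x i j = x j.
Proof. by rewrite ffunE => /negbTE ->; rewrite addbF. Qed.

Definition antipode m x : vec n := [ffun k => x k (+) (k < m)].

Lemma antipodeK m : involutive (antipode m).
Proof. by move=> x; apply/ffunP => k; rewrite !ffunE -addbA addbb addbF. Qed.

Lemma antipode_flip m x i : antipode m (flip x i) = flip (antipode m x) i.
Proof. by apply/ffunP => k; rewrite !ffunE addbAC. Qed.

Definition prefix k : vec n := [ffun i : 'I_n => i < k].

Lemma prefixS k (kn : k < n) : prefix k.+1 = flip (prefix k) (Ordinal kn).
Proof. by apply/ffunP => i; rewrite !ffunE ltnS leq_eqVlt -val_eqE /=; case: ltngtP. Qed.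

Lemma antipode_prefix0 m : antipode m (prefix 0) = prefix m.
Proof. by apply/ffunP => i; rewrite !ffunE. Qed.

Definition cube_proper (T : eqType) m (c : vec n -> T) :=
  forall x i, i < m -> c x != c (flip x i).

Definition height m (c : vec n -> 'I_3) (h : vec n -> int) :=
  (forall x i, i < m -> `|h (flip x i) - h x|%R = 1%R) /\ (forall x, (h x = c x %[mod 3])%Z).

Lemma height_succ m (c : vec n -> 'I_3) h :
  m < n -> cube_proper m.+1 c -> height m c h -> exists h', height m.+1 c h'.
Proof.
move=> mn proper_c [h_step h_mod]; set j := Ordinal mn.
pose h' x := if x j then (h (flip x j) + unit_lift (c x) (c (flip x j)))%R else h x.
have lift_j x : `|unit_lift (c x) (c (flip x j))|%R = 1%R /\
    ((c (flip x j))%:Z + unit_lift (c x) (c (flip x j)) = c x %[mod 3])%Z.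
  by apply/unit_liftP/proper_c.
have h'_mod x : (h' x = c x %[mod 3])%Z.
  rewrite /h'; case: ifP => _ //; have := h_mod (flip x j); have := lift_j x; lia.
exists h'; split=> // x i; rewrite ltnS leq_eqVlt => /predU1P [ij | im].
  have -> : i = j by apply: ord_inj.
  rewrite /h' flip_at; case: (x j) => /=; first by have := lift_j x; lia.
  by rewrite flipK; have := lift_j (flip x j); rewrite flipK; lia.
have ji : j != i by rewrite -val_eqE neq_ltn im orbT.
rewrite /h' (flip_other x ji); case: ifP => xj; last exact: h_step.
have c_neq : ~ ((c (flip x i))%:Z = c x %[mod 3])%Z.
  by move/ord3_modz_inj/eqP; rewrite eq_sym (negbTE (proper_c x i (ltnW im))).
(* The step of h' along i is odd, of size at most 3 and nonzero mod 3, hence +-1. *)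
have := h_step (flip x j) i im; rewrite flipC.
have := h'_mod x; have := h'_mod (flip x i); rewrite /h' (flip_other x ji) xj.
have := lift_j x; have := lift_j (flip x i); lia.
Qed.

Lemma cube_height m (c : vec n -> 'I_3) :
  m <= n -> cube_proper m c -> exists h, height m c h.
Proof.
elim: m => [|m IH] mn proper_c.
  by exists (fun x => c x : int); split=> // x i; rewrite ltn0.
have [h h_height] := IH (ltnW mn) (fun x i im => proper_c x i (ltnW im)).
exact: height_succ h_height.
Qed.

Lemma cube_antipodal_colour m (c : vec n -> 'I_3) :
  m <= n -> ~~ odd m -> cube_proper m c -> exists x, c (antipode m x) = c x.
Proof.
move=> mn m_even proper_c; have [h [h_step h_mod]] := cube_height mn proper_c.
pose p k := h (prefix k); pose q k := h (antipode m (prefix k)).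
have p_step k : k < m -> `|p k.+1 - p k|%R = 1%R.
  by move=> km; rewrite /p (prefixS (leq_trans km mn)); apply: h_step.
have q_step k : k < m -> `|q k.+1 - q k|%R = 1%R.
  by move=> km; rewrite /q (prefixS (leq_trans km mn)) antipode_flip; apply: h_step.
have q0 : q 0%N = p m by rewrite /q antipode_prefix0.
have qm : q m = p 0%N by rewrite /q -antipode_prefix0 antipodeK.
have walk_parity k : k <= m -> (p k = p 0%N + k %[mod 2])%Z /\ (q k = q 0%N + k %[mod 2])%Z.
  by move=> km; split; apply: unit_walk_parity => j jk;
    [apply: p_step | apply: q_step]; apply: leq_trans jk km.
have [k km gk] : exists2 k, k <= m & (q k - p k = 0)%R.
  apply: (@discrete_ivt (fun k => q k - p k)%R 2%R m) => [j jm|j jm|] /=.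
  - by have := p_step j jm; have := q_step j jm; lia.
  - have := walk_parity j jm; have := walk_parity m (leqnn m); rewrite q0; move: m_even; lia.
  - by rewrite qm q0 -[(p 0%N - p m)%R]opprB mulrN oppr_le0 -expr2 sqr_ge0.
exists (prefix k); apply: ord3_modz_inj.
by have := h_mod (prefix k); have := h_mod (antipode m (prefix k)); rewrite /p /q in gk; lia.
Qed.

End Hypercube.

Lemma card_ord_lt n m : m <= n -> #|[set k : 'I_n | k < m]| = m.
Proof.
move=> mn; rewrite -sum1_card (eq_bigl (fun k : 'I_n => k < m)) => [|k]; last by rewrite inE.
by rewrite -(big_ord_widen _ (fun _ => 1) mn) sum1_card card_ord.
Qed.

Lemma hammingxx n (x : vec n) : hamming x x = 0.
Proof. by apply/eqP; rewrite cards_eq0; apply/eqP/setP => i; rewrite !inE eqxx. Qed.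

Lemma H2adjE n (x y : vec n) : 2 <= n -> H2adj x y = (n.-1 <= hamming x y).
Proof.
by move=> n2; rewrite /H2adj; case: eqP => [->|//]; rewrite hammingxx; case: n n2 x y => [|[]].
Qed.

Section Twist.

Variables n m : nat.
Implicit Types (x : vec n) (i : 'I_n).

Definition parity x := odd (\sum_(k < n | k < m) x k).

Definition twist x : vec n := [ffun k : 'I_n => ((k < m) && x k) (+) parity x].

Lemma parity_flip x i : i < m -> parity (flip x i) = ~~ parity x.
Proof.
move=> im; rewrite /parity (bigD1 i) //= [in RHS](bigD1 i) //= flip_at.
rewrite (eq_bigr (fun k : 'I_n => x k : nat)) => [|k /andP [_ ki]]; last by rewrite flip_other.
by rewrite !oddD !oddb; case: (x i); case: (odd _).
Qed.

Lemma parity_antipode x : m <= n -> ~~ odd m -> parity (antipode m x) = parity x.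
Proof.
move=> mn m_even.
have : odd (\sum_(k < n | k < m) antipode m x k + \sum_(k < n | k < m) x k) = false.
  rewrite -big_split /= (eq_bigr (fun _ => 1)) => [|k km].
    by rewrite -(big_ord_widen _ (fun _ => 1) mn) sum1_card card_ord (negbTE m_even).
  by rewrite ffunE km addbT addn_negb.
by rewrite oddD /parity; case: (odd _); case: (odd _).
Qed.

Lemma hamming_twist_flip x i : i < m -> hamming (twist x) (twist (flip x i)) = n.-1.
Proof.
move=> im; rewrite /hamming -[n in RHS]card_ord -(cardsC1 i); apply: eq_card => k.
rewrite !inE !ffunE parity_flip //; case: (k =P i) => [->|_].
  by rewrite im /=; case: (x i); case: (parity x).
by rewrite addbF; case: (_ && _); case: (parity x).
Qed.

Lemma hamming_twist_antipode x :
  m <= n -> ~~ odd m -> hamming (twist x) (twist (antipode m x)) = m.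
Proof.
move=> mn m_even; rewrite /hamming -[m in RHS](card_ord_lt mn); apply: eq_card => k.
rewrite !inE !ffunE parity_antipode //.
by case: (k < m) => /=; case: (x k); case: (parity x).
Qed.

End Twist.

Lemma H2_not_3colourable n : 2 <= n -> ~ colourable (@H2adj n) 3.
Proof.
move=> n2 [col proper_col]; pose m := n - odd n.
have mn : m <= n by apply: leq_subr.
have nm : n.-1 <= m by rewrite /m; case: (odd n); lia.
have m_even : ~~ odd m by rewrite oddB ?oddb ?addbb //; case: (odd n); lia.
have [|x] := @cube_antipodal_colour n m (col \o twist m) mn m_even.
  by move=> x i im; apply: proper_col; rewrite H2adjE // hamming_twist_flip.
apply/eqP; rewrite eq_sym; apply: proper_col.
by rewrite H2adjE // hamming_twist_antipode.
Qed.

Lemma H2_4colourable n : 2 <= n -> colourable (@H2adj n) 4.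
Proof.
move=> n2; pose i0 : 'I_n := Ordinal (ltnW n2); pose i1 : 'I_n := Ordinal n2.
have lt4 (x : vec n) : 2 * x i0 + x i1 < 4 by case: (x i0); case: (x i1).
exists (fun x => Ordinal (lt4 x)) => x y; rewrite H2adjE //; apply: contraTneq.
move=> /(congr1 val) /= same.
have agree : [set k | x k != y k] \subset ~: [set i0; i1].
  apply/subsetP => k; rewrite !inE; apply: contra => /orP [] /eqP ->;
    by move: same; case: (x i0); case: (y i0); case: (x i1); case: (y i1).
rewrite -ltnNge; apply: leq_ltn_trans (subset_leq_card agree) _.
by rewrite cardsCs setCK cards2 card_ord /=; lia.
Qed.

Theorem theorem3p3 (n : nat) : 2 <= n -> chromatic_number_is (@H2adj n) 4.
Proof.
move=> n2; split; first exact: H2_4colourable.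
move=> j j4 /(@colourable_leq _ _ j 3 j4); exact: H2_not_3colourable.
Qed.
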